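(* Let $\Omega\subseteq\mathbb{R}^2$ be a domain and let $f_1,f_2,c_0,c_1,c_2$ be smooth real functions of one variable $r>0$. For $x=(x_1,x_2)\in\Omega$ and $y=(y_1,y_2)\in\mathbb{R}^2\setminus\{0\}$ put $$r=\sqrt{x_1^2+x_2^2},\qquad u=\sqrt{y_1^2+y_2^2},\qquad s=\frac{x_1y_1+x_2y_2}{u},$$ and consider the open set $U=\{(x,y): x\in\Omega,\ y\neq 0,\ r^2-s^2>0\}$, i.e. the set of pairs with $x$ and $y$ linearly independent. On $U$ define $$P=f_1(r)\,s+f_2(r)\sqrt{r^2-s^2},\qquad Q=c_0(r)+c_2(r)s^2+c_1(r)\,s\sqrt{r^2-s^2},$$ and, for $i=1,2$, $$G^i=u\,P\,y_i+u^2\,Q\,x_i .$$ Then the following hold on $U$. (1) The mean Berwald curvature of this spray vanishes identically: $E_{ij}=0$ for all $i,j\in\{1,2\}$. (2) The function $H:=(n+1)(P-sP_s)+(r^2-s^2)(Q_s-sQ_{ss})$ with $n=2$ equals $\dfrac{r^2\bigl(3f_2(r)+r^2c_1(r)\bigr)}{\sqrt{r^2-s^2}}$. In particular, at every point of $U$ with $3f_2(r)+r^2c_1(r)\neq 0$, $H\neq 0$ although $E_{ij}=0$. Consequently, in dimension two the condition $(n+1)(P-sP_s)+(r^2-s^2)(Q_s-sQ_{ss})=0$ is not necessary for the vanishing of the mean Berwald curvature of a spray of the form $G^i=uPy_i+u^2Qx_i$.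
   Context: The square root denotes the nonnegative square root; by the Cauchy–Schwarz inequality $s^2\le r^2$. Here $P,Q$ are regarded as functions of $(r,s)$, and $P_s,Q_s,Q_{ss}$ denote partial derivatives with respect to $s$ at fixed $r$. The functions $G^i(x,y)$ are the coefficients of a spray on $U$, and its mean Berwald curvature is $E_{ij}=\frac12\,\frac{\partial^2}{\partial y_i\,\partial y_j}\Bigl(\sum_{m=1}^2\frac{\partial G^m}{\partial y_m}\Bigr)$, $i,j\in\{1,2\}$. *)

From Stdlib Require Import Reals.
From Coquelicot Require Import Coquelicot.
Open Scope R_scope.

Definition domain2 (Omega : R -> R -> Prop) : Prop :=
  (exists a b, Omega a b) /\
  open (fun p : R * R => Omega (fst p) (snd p)) /\
  (forall A B : R * R -> Prop, open A -> open B ->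
     (forall a b, Omega a b -> A (a, b) \/ B (a, b)) ->
     (exists a b, Omega a b /\ A (a, b)) ->
     (exists a b, Omega a b /\ B (a, b)) ->
     exists a b, Omega a b /\ A (a, b) /\ B (a, b)).

Definition smooth_pos (f : R -> R) : Prop :=
  forall (k : nat) (r : R), 0 < r -> ex_derive (Derive_n f k) r.

(* Functions of (x1, x2, y1, y2). *)
Definition fn4 := R -> R -> R -> R -> R.

Definition rr (x1 x2 : R) : R := sqrt (x1 ^ 2 + x2 ^ 2).
Definition uu (y1 y2 : R) : R := sqrt (y1 ^ 2 + y2 ^ 2).
Definition ss (x1 x2 y1 y2 : R) : R := (x1 * y1 + x2 * y2) / uu y1 y2.

Definition inU (Omega : R -> R -> Prop) (x1 x2 y1 y2 : R) : Prop :=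
  Omega x1 x2 /\ (y1, y2) <> (0, 0) /\
  rr x1 x2 ^ 2 - ss x1 x2 y1 y2 ^ 2 > 0.

Definition PP (f1 f2 : R -> R) (r s : R) : R :=
  f1 r * s + f2 r * sqrt (r ^ 2 - s ^ 2).
Definition QQ (c0 c1 c2 : R -> R) (r s : R) : R :=
  c0 r + c2 r * s ^ 2 + c1 r * s * sqrt (r ^ 2 - s ^ 2).

Definition Gsp (f1 f2 c0 c1 c2 : R -> R) (i : nat) : fn4 :=
  fun x1 x2 y1 y2 =>
    let r := rr x1 x2 in let s := ss x1 x2 y1 y2 in let u := uu y1 y2 in
    let yi := if Nat.eqb i 1 then y1 else y2 in
    let xi := if Nat.eqb i 1 then x1 else x2 in
    u * PP f1 f2 r s * yi + u ^ 2 * QQ c0 c1 c2 r s * xi.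

Definition dy (k : nat) (F : fn4) : fn4 :=
  fun x1 x2 y1 y2 =>
    if Nat.eqb k 1 then Derive (fun t => F x1 x2 t y2) y1
    else Derive (fun t => F x1 x2 y1 t) y2.

(* Mean Berwald curvature E_ij = 1/2 d^2/(dy_i dy_j) (sum_m dG^m/dy_m). *)
Definition Emean (G : nat -> fn4) (i j : nat) : fn4 :=
  fun x1 x2 y1 y2 =>
    / 2 * dy i (dy j (fun a b c d => dy 1 (G 1%nat) a b c d + dy 2 (G 2%nat) a b c d))
              x1 x2 y1 y2.

Definition d_s (F : R -> R -> R) (r s : R) : R := Derive (fun t => F r t) s.

Definition HH (f1 f2 c0 c1 c2 : R -> R) (r s : R) : R :=
  (INR 2 + 1) * (PP f1 f2 r s - s * d_s (PP f1 f2) r s)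
  + (r ^ 2 - s ^ 2) * (d_s (QQ c0 c1 c2) r s - s * d_s (d_s (QQ c0 c1 c2)) r s).

(* Let L = x1 y1 + x2 y2 and K = x1 y2 - x2 y1. Then u s = L, and by Lagrange's identity
   u^2 (r^2 - s^2) = K^2, so u sqrt(r^2 - s^2) = |K|. On each half-plane of y where K has a
   fixed sign, u P and u^2 Q are therefore polynomials in y of degrees 1 and 2, so the G^i
   are cubic polynomials in y there, their divergence sum_m dG^m/dy_m is linear in y, and
   its second y-derivatives vanish, derivatives being local and half-planes open. *)
From Stdlib Require Import Reals Lra.
From Coquelicot Require Import Coquelicot.
Open Scope R_scope.

Lemma Derive_ext_pos (f g h : R -> R) (t0 : R) :
  continuous h t0 -> 0 < h t0 -> (forall t, 0 < h t -> f t = g t) ->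
  Derive f t0 = Derive g t0.
Proof.
  intros Hc Hpos Hfg. apply Derive_ext_loc.
  assert (Hnear : locally t0 (fun t => 0 < h t)).
  { apply Hc. exact (locally_open _ _ (open_gt 0) (fun _ H => H) _ Hpos). }
  exact (filter_imp _ _ Hfg Hnear).
Qed.

Definition halfplane (x1 x2 sg y1 y2 : R) : Prop := 0 < sg * (x1 * y2 - x2 * y1).

Section HalfPlane.

Variables x1 x2 sg : R.

Lemma dy_ext_halfplane (F F' : fn4) (k : nat) :
  (forall y1 y2, halfplane x1 x2 sg y1 y2 -> F x1 x2 y1 y2 = F' x1 x2 y1 y2) ->
  forall y1 y2, halfplane x1 x2 sg y1 y2 -> dy k F x1 x2 y1 y2 = dy k F' x1 x2 y1 y2.
Proof.
  intros HFF' y1 y2 Hy. unfold dy. destruct (Nat.eqb k 1).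
  - apply (Derive_ext_pos _ _ (fun t => sg * (x1 * y2 - x2 * t))); [| exact Hy |].
    + apply (@ex_derive_continuous R_AbsRing R_NormedModule). auto_derive. exact I.
    + intros t Ht. now apply HFF'.
  - apply (Derive_ext_pos _ _ (fun t => sg * (x1 * t - x2 * y1))); [| exact Hy |].
    + apply (@ex_derive_continuous R_AbsRing R_NormedModule). auto_derive. exact I.
    + intros t Ht. now apply HFF'.
Qed.

Lemma dy_dy_eq0_of_linear (F : fn4) (a b : R) (i j : nat) :
  (forall y1 y2, halfplane x1 x2 sg y1 y2 -> F x1 x2 y1 y2 = a * y1 + b * y2) ->
  forall y1 y2, halfplane x1 x2 sg y1 y2 -> dy i (dy j F) x1 x2 y1 y2 = 0.
Proof.
  intros HF.
  assert (HdF : forall y1 y2, halfplane x1 x2 sg y1 y2 ->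
            dy j F x1 x2 y1 y2 = if Nat.eqb j 1 then a else b).
  { intros y1 y2 Hy.
    rewrite (dy_ext_halfplane F (fun _ _ y1 y2 => a * y1 + b * y2) j HF y1 y2 Hy).
    unfold dy. destruct (Nat.eqb j 1); apply is_derive_unique; auto_derive; trivial; ring. }
  intros y1 y2 Hy.
  rewrite (dy_ext_halfplane _ (fun _ _ _ _ => if Nat.eqb j 1 then a else b) i HdF y1 y2 Hy).
  unfold dy. destruct (Nat.eqb i 1); apply Derive_const.
Qed.

End HalfPlane.

Lemma uu_sqr (y1 y2 : R) : uu y1 y2 ^ 2 = y1 ^ 2 + y2 ^ 2.
Proof. unfold uu. apply pow2_sqrt. nra. Qed.

Lemma rr_sqr (x1 x2 : R) : rr x1 x2 ^ 2 = x1 ^ 2 + x2 ^ 2.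
Proof. unfold rr. apply pow2_sqrt. nra. Qed.

Lemma uu_mul_ss (x1 x2 y1 y2 : R) : uu y1 y2 * ss x1 x2 y1 y2 = x1 * y1 + x2 * y2.
Proof.
  unfold ss. destruct (Req_dec (uu y1 y2) 0) as [Hu | Hu].
  - assert (Hy : y1 ^ 2 + y2 ^ 2 = 0) by (rewrite <- uu_sqr, Hu; ring).
    assert (y1 = 0) by nra. assert (y2 = 0) by nra. subst. rewrite Hu. ring.
  - field. exact Hu.
Qed.

Lemma uu_sqr_mul_rs (x1 x2 y1 y2 : R) :
  uu y1 y2 ^ 2 * (rr x1 x2 ^ 2 - ss x1 x2 y1 y2 ^ 2) = (x1 * y2 - x2 * y1) ^ 2.
Proof.
  replace (uu y1 y2 ^ 2 * (rr x1 x2 ^ 2 - ss x1 x2 y1 y2 ^ 2))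
    with (uu y1 y2 ^ 2 * rr x1 x2 ^ 2 - (uu y1 y2 * ss x1 x2 y1 y2) ^ 2) by ring.
  rewrite uu_mul_ss, uu_sqr, rr_sqr. ring.
Qed.

Lemma uu_mul_sqrt_rs (x1 x2 y1 y2 : R) :
  uu y1 y2 * sqrt (rr x1 x2 ^ 2 - ss x1 x2 y1 y2 ^ 2) = Rabs (x1 * y2 - x2 * y1).
Proof.
  rewrite <- sqrt_Rsqr_abs, Rsqr_pow2, <- uu_sqr_mul_rs.
  rewrite sqrt_mult_alt by (apply pow2_ge_0).
  rewrite sqrt_pow2 by (apply sqrt_pos). reflexivity.
Qed.

Lemma Gsp_eq (f1 f2 c0 c1 c2 : R -> R) (i : nat) (x1 x2 y1 y2 : R) :
  let r := rr x1 x2 in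
  let L := x1 * y1 + x2 * y2 in let K := Rabs (x1 * y2 - x2 * y1) in
  Gsp f1 f2 c0 c1 c2 i x1 x2 y1 y2 =
    (f1 r * L + f2 r * K) * (if Nat.eqb i 1 then y1 else y2)
    + (c0 r * (y1 ^ 2 + y2 ^ 2) + c2 r * L ^ 2 + c1 r * L * K)
      * (if Nat.eqb i 1 then x1 else x2).
Proof.
  unfold Gsp, PP, QQ. cbv zeta.
  rewrite <- (uu_mul_ss x1 x2 y1 y2), <- (uu_mul_sqrt_rs x1 x2 y1 y2), <- (uu_sqr y1 y2).
  ring.
Qed.

(* The G^i on a half-plane where x1 y2 - x2 y1 has sign sg; the sign is absorbed into
   f2 and c1. *)
Definition Gcubic (f1 f2 c0 c1 c2 : R -> R) (i : nat) : fn4 :=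
  fun x1 x2 y1 y2 =>
    let r := rr x1 x2 in
    let L := x1 * y1 + x2 * y2 in let K := x1 * y2 - x2 * y1 in
    (f1 r * L + f2 r * K) * (if Nat.eqb i 1 then y1 else y2)
    + (c0 r * (y1 ^ 2 + y2 ^ 2) + c2 r * L ^ 2 + c1 r * L * K)
      * (if Nat.eqb i 1 then x1 else x2).

Lemma Gcubic_divergence (f1 f2 c0 c1 c2 : R -> R) (x1 x2 y1 y2 : R) :
  let r := rr x1 x2 in
  dy 1 (Gcubic f1 f2 c0 c1 c2 1) x1 x2 y1 y2 + dy 2 (Gcubic f1 f2 c0 c1 c2 2) x1 x2 y1 y2
  = (3 * f1 r + 2 * c0 r + 2 * (x1 ^ 2 + x2 ^ 2) * c2 r) * (x1 * y1 + x2 * y2)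
    + (3 * f2 r + (x1 ^ 2 + x2 ^ 2) * c1 r) * (x1 * y2 - x2 * y1).
Proof.
  intros r. unfold dy, Gcubic. simpl. fold r.
  erewrite is_derive_unique; [| auto_derive; [exact I | reflexivity]].
  erewrite is_derive_unique; [| auto_derive; [exact I | reflexivity]].
  ring.
Qed.

Lemma Rabs_halfplane (x1 x2 sg y1 y2 : R) :
  sg * sg = 1 -> halfplane x1 x2 sg y1 y2 -> Rabs (x1 * y2 - x2 * y1) = sg * (x1 * y2 - x2 * y1).
Proof.
  unfold halfplane. intros Hsg Hy.
  destruct (Rcase_abs (x1 * y2 - x2 * y1)) as [Hneg | Hnneg].
  - assert (Hs : sg < 0) by nra.
    assert (sg = -1) by nra. subst. rewrite Rabs_left by exact Hneg. ring.
  - assert (Hs : 0 < sg) by nra.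
    assert (sg = 1) by nra. subst. rewrite Rabs_right by exact Hnneg. ring.
Qed.

Lemma Gsp_eq_Gcubic (f1 f2 c0 c1 c2 : R -> R) (sg : R) (i : nat) (x1 x2 y1 y2 : R) :
  sg * sg = 1 -> halfplane x1 x2 sg y1 y2 ->
  Gsp f1 f2 c0 c1 c2 i x1 x2 y1 y2
  = Gcubic f1 (fun r => sg * f2 r) c0 (fun r => sg * c1 r) c2 i x1 x2 y1 y2.
Proof.
  intros Hsg Hy. rewrite Gsp_eq, (Rabs_halfplane x1 x2 sg y1 y2 Hsg Hy).
  unfold Gcubic. ring.
Qed.

Lemma Emean_Gsp_halfplane (f1 f2 c0 c1 c2 : R -> R) (sg : R) (i j : nat) (x1 x2 y1 y2 : R) :
  sg * sg = 1 -> halfplane x1 x2 sg y1 y2 ->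
  Emean (Gsp f1 f2 c0 c1 c2) i j x1 x2 y1 y2 = 0.
Proof.
  intros Hsg Hy. unfold Emean.
  set (r := rr x1 x2).
  set (a := 3 * f1 r + 2 * c0 r + 2 * (x1 ^ 2 + x2 ^ 2) * c2 r).
  set (b := sg * (3 * f2 r + (x1 ^ 2 + x2 ^ 2) * c1 r)).
  rewrite (dy_dy_eq0_of_linear x1 x2 sg _ (a * x1 - b * x2) (a * x2 + b * x1) i j);
    [ring | | exact Hy].
  intros z1 z2 Hz.
  assert (HG : forall m, forall w1 w2, halfplane x1 x2 sg w1 w2 ->
            Gsp f1 f2 c0 c1 c2 m x1 x2 w1 w2
            = Gcubic f1 (fun r => sg * f2 r) c0 (fun r => sg * c1 r) c2 m x1 x2 w1 w2)
    by (intros m w1 w2; now apply Gsp_eq_Gcubic).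
  rewrite (dy_ext_halfplane x1 x2 sg _ _ 1 (HG 1%nat) z1 z2 Hz).
  rewrite (dy_ext_halfplane x1 x2 sg _ _ 2 (HG 2%nat) z1 z2 Hz).
  rewrite Gcubic_divergence. fold r. unfold a, b. ring.
Qed.

Lemma inU_cross_neq0 (Omega : R -> R -> Prop) (x1 x2 y1 y2 : R) :
  inU Omega x1 x2 y1 y2 -> x1 * y2 - x2 * y1 <> 0.
Proof.
  intros [_ [Hy Hrs]] HK.
  assert (Hu : uu y1 y2 ^ 2 = 0).
  { apply (Rmult_eq_reg_r (rr x1 x2 ^ 2 - ss x1 x2 y1 y2 ^ 2)); [| lra].
    rewrite uu_sqr_mul_rs, HK. ring. }
  rewrite uu_sqr in Hu. apply Hy. f_equal; nra.
Qed.

Section Hformula.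

Variables (f1 f2 c0 c1 c2 : R -> R) (r : R).

Lemma d_s_PP (s : R) : 0 < r ^ 2 - s ^ 2 ->
  d_s (PP f1 f2) r s = f1 r - f2 r * s / sqrt (r ^ 2 - s ^ 2).
Proof.
  intros Hrs. assert (0 < sqrt (r ^ 2 - s ^ 2)) by (apply sqrt_lt_R0; lra).
  unfold d_s, PP. apply is_derive_unique. auto_derive; [lra |].
  replace (r * (r * 1) + - (s * (s * 1))) with (r ^ 2 - s ^ 2) by ring.
  field. lra.
Qed.

Lemma d_s_QQ (s : R) : 0 < r ^ 2 - s ^ 2 ->
  d_s (QQ c0 c1 c2) r s
  = 2 * c2 r * s + c1 r * sqrt (r ^ 2 - s ^ 2) - c1 r * s ^ 2 / sqrt (r ^ 2 - s ^ 2).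
Proof.
  intros Hrs. assert (0 < sqrt (r ^ 2 - s ^ 2)) by (apply sqrt_lt_R0; lra).
  unfold d_s, QQ. apply is_derive_unique. auto_derive; [lra |].
  replace (r * (r * 1) + - (s * (s * 1))) with (r ^ 2 - s ^ 2) by ring.
  field. lra.
Qed.

Lemma d_s_d_s_QQ (s : R) : 0 < r ^ 2 - s ^ 2 ->
  d_s (d_s (QQ c0 c1 c2)) r s
  = 2 * c2 r - 3 * c1 r * s / sqrt (r ^ 2 - s ^ 2) - c1 r * s ^ 3 / sqrt (r ^ 2 - s ^ 2) ^ 3.
Proof.
  intros Hrs. assert (Hw : 0 < sqrt (r ^ 2 - s ^ 2)) by (apply sqrt_lt_R0; lra).
  unfold d_s at 1.
  rewrite (Derive_ext_pos _
    (fun t => 2 * c2 r * t + c1 r * sqrt (r ^ 2 - t ^ 2) - c1 r * t ^ 2 / sqrt (r ^ 2 - t ^ 2))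
    (fun t => r ^ 2 - t ^ 2)); [| | exact Hrs | exact d_s_QQ].
  2: { apply (@ex_derive_continuous R_AbsRing R_NormedModule). auto_derive. exact I. }
  apply is_derive_unique. auto_derive.
  all: replace (r * (r * 1) + - (s * (s * 1))) with (r ^ 2 - s ^ 2) by ring.
  - repeat split; lra.
  - field_simplify; [| lra | lra].
    rewrite pow2_sqrt by lra. field. lra.
Qed.

Lemma HH_eq (s : R) : 0 < r ^ 2 - s ^ 2 ->
  HH f1 f2 c0 c1 c2 r s = r ^ 2 * (3 * f2 r + r ^ 2 * c1 r) / sqrt (r ^ 2 - s ^ 2).
Proof.
  intros Hrs.
  assert (HW : 0 < sqrt (r ^ 2 - s ^ 2)) by (apply sqrt_lt_R0; lra).
  assert (HW2 : sqrt (r ^ 2 - s ^ 2) ^ 2 = r ^ 2 - s ^ 2) by (apply pow2_sqrt; lra).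
  unfold HH. rewrite d_s_PP, d_s_QQ, d_s_d_s_QQ by exact Hrs. unfold PP. simpl INR.
  set (W := sqrt (r ^ 2 - s ^ 2)) in *.
  replace (r ^ 2) with (W ^ 2 + s ^ 2) by lra.
  field. lra.
Qed.

End Hformula.

Theorem mainTheorem1 (Omega : R -> R -> Prop) (f1 f2 c0 c1 c2 : R -> R) :
  domain2 Omega ->
  smooth_pos f1 -> smooth_pos f2 -> smooth_pos c0 -> smooth_pos c1 -> smooth_pos c2 ->
  forall x1 x2 y1 y2 : R, inU Omega x1 x2 y1 y2 ->
    (forall i j : nat, (i = 1%nat \/ i = 2%nat) -> (j = 1%nat \/ j = 2%nat) ->
       Emean (Gsp f1 f2 c0 c1 c2) i j x1 x2 y1 y2 = 0) /\
    (let r := rr x1 x2 in let s := ss x1 x2 y1 y2 in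
     HH f1 f2 c0 c1 c2 r s
       = r ^ 2 * (3 * f2 r + r ^ 2 * c1 r) / sqrt (r ^ 2 - s ^ 2) /\
     (3 * f2 r + r ^ 2 * c1 r <> 0 -> HH f1 f2 c0 c1 c2 r s <> 0)).
Proof.
  intros _ _ _ _ _ _ x1 x2 y1 y2 HU.
  assert (HK := inU_cross_neq0 Omega x1 x2 y1 y2 HU).
  destruct HU as [_ [_ Hrs]].
  split.
  - intros i j _ _.
    destruct (Rdichotomy _ _ HK).
    + apply (Emean_Gsp_halfplane _ _ _ _ _ (-1)); unfold halfplane; lra.
    + apply (Emean_Gsp_halfplane _ _ _ _ _ 1); unfold halfplane; lra.
  - intros r s. fold r s in Hrs.
    assert (HW : 0 < sqrt (r ^ 2 - s ^ 2)) by (apply sqrt_lt_R0; lra).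
    rewrite HH_eq by lra.
    split; [reflexivity |].
    intros Hc. apply Rmult_integral_contrapositive_currified.
    + apply Rmult_integral_contrapositive_currified; [| exact Hc].
      apply pow_nonzero. intros Hr. rewrite Hr in Hrs. nra.
    + apply Rinv_neq_0_compat. lra.
Qed.
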